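(* Let $G=(V,E)$ be a finite, simple, undirected, connected graph, let $S\subseteq V$ be nonempty and let $\ell\geq 1$ be an integer. Then $S$ is an $\ell$-solid-resolving set of $G$ if and only if for every vertex $x\in V$ and every nonempty set $Y\subseteq V$ with $x\notin Y$ and $|Y|\leq \ell$ there exists $s\in S$ such that $d(s,x)<d(s,Y)$.
   Context: $d(u,v)$ denotes the shortest-path distance in $G$, and for a nonempty $X\subseteq V$, $d(s,X)=\min_{x\in X} d(s,x)$. For $S=\{s_1,\dots,s_k\}\subseteq V$ and nonempty $X\subseteq V$, the distance array is $\mathcal{D}_S(X)=(d(s_1,X),\dots,d(s_k,X))$. A set $S\subseteq V$ is an $\ell$-solid-resolving set of $G$ if for all distinct nonempty sets $X,Y\subseteq V$ with $|X|\leq \ell$ (and $Y$ of arbitrary size) we have $\mathcal{D}_S(X)\neq \mathcal{D}_S(Y)$. *)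

From mathcomp Require Import all_boot.
Set Implicit Arguments. Unset Strict Implicit. Unset Printing Implicit Defensive.

Definition simple_graph (T : finType) (e : rel T) : Prop :=
  symmetric e /\ irreflexive e.

Definition connected_graph (T : finType) (e : rel T) : Prop :=
  forall x y : T, connect e x y.

Definition walk_n (T : finType) (e : rel T) (x y : T) (n : nat) : bool :=
  [exists p : n.-tuple T, path e x p && (last x p == y)].

(* shortest-path distance d(x,y): least n such that there is a walk of length n
   from x to y (searched among 0..#|T|-1, which suffices in a connected graph;
   returns #|T| if y is unreachable). *)
Definition dist (T : finType) (e : rel T) (x y : T) : nat :=
  find (walk_n e x y) (iota 0 #|T|).

(* d(s,X) = min_{x in X} d(s,x), for nonempty X (the neutral value #|T| exceeds
   every distance in a connected graph, so it never matters for nonempty X). *)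
Definition dist_set (T : finType) (e : rel T) (s : T) (X : {set T}) : nat :=
  \big[minn/#|T|]_(x in X) dist e s x.

Definition dist_array (T : finType) (e : rel T) (S X : {set T}) : seq nat :=
  [seq dist_set e s X | s <- enum S].

Definition solid_resolving (T : finType) (e : rel T) (l : nat) (S : {set T}) : Prop :=
  forall X Y : {set T}, X != set0 -> Y != set0 -> X != Y -> #|X| <= l ->
    dist_array e S X != dist_array e S Y.

(* Only the fact that [d(s, X)] is a minimum over [X] is used.  Forward: if [x \notin Y] then [Y] and [x |: Y] are
   distinct sets with [#|Y| <= l], and [d(s, x |: Y) = min (d(s, x), d(s, Y))]
   differs from [d(s, Y)] exactly when [d(s, x) < d(s, Y)].  Backward: for
   distinct [X], [Y] with [#|X| <= l], either [Y \subset X] and some [x] lies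
   in [X :\: Y], whence [d(s, X) <= d(s, x) < d(s, Y)]; or some [x] lies in
   [Y :\: X], whence [d(s, Y) <= d(s, x) < d(s, X)]. *)
From mathcomp Require Import all_boot order.
Set Implicit Arguments.
Unset Strict Implicit.
Unset Printing Implicit Defensive.
Import Order.TTheory.

Section DistSet.
Variables (T : finType) (e : rel T).
Implicit Types (s x : T) (S X Y : {set T}).

(* [minn] is convertible to [Order.min] on [nat], so the [bigmin] lemmas of
   the order library apply to [dist_set]. *)
Lemma dist_set_le s X x : x \in X -> dist_set e s X <= dist e s x.
Proof. exact: (@bigmin_le_cond _ nat). Qed.

Lemma dist_setU1 s X x :
  x \notin X -> dist_set e s (x |: X) = minn (dist e s x) (dist_set e s X).
Proof.
move=> xX; rewrite /dist_set (@bigminD1 _ nat _ _ x) ?setU11 //; congr minn.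
apply: eq_bigl => y; rewrite in_setU1.
by case: eqVneq => [->|] /=; rewrite ?(negbTE xX) ?andbT ?andbF.
Qed.

Lemma eq_dist_array S X Y :
  dist_array e S X = dist_array e S Y <->
  {in S, forall s, dist_set e s X = dist_set e s Y}.
Proof.
split=> [/eq_in_map eqXY s sS | eqXY]; first by apply: eqXY; rewrite mem_enum.
by apply/eq_in_map => s; rewrite mem_enum; apply: eqXY.
Qed.

Lemma solid_resolving_separates l S :
  solid_resolving e l S ->
  forall x Y, Y != set0 -> x \notin Y -> #|Y| <= l ->
    exists2 s, s \in S & dist e s x < dist_set e s Y.
Proof.
move=> resS x Y Y0 xY leYl.
have xY0 : x |: Y != set0 by apply/set0Pn; exists x; rewrite setU11.
have neqY : Y != x |: Y by apply: contraNneq xY => ->; rewrite setU11.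
have [/exists_inP[s sS lt_xY] | noS] :=
  boolP [exists s in S, dist e s x < dist_set e s Y]; first by exists s.
case/eqP: (resS _ _ Y0 xY0 neqY leYl); apply/eq_dist_array => s sS.
rewrite dist_setU1 //; apply/esym/minn_idPr; rewrite leqNgt.
by apply: contra noS => lt_xY; apply/exists_inP; exists s.
Qed.

Lemma separates_solid_resolving l S :
  (forall x Y, Y != set0 -> x \notin Y -> #|Y| <= l ->
     exists2 s, s \in S & dist e s x < dist_set e s Y) ->
  solid_resolving e l S.
Proof.
move=> sepS X Y X0 Y0 neqXY leXl.
have separated s : s \in S ->
    dist_set e s X != dist_set e s Y -> dist_array e S X != dist_array e S Y.
  by move=> sS; apply: contra => /eqP/eq_dist_array->.
case: (boolP (Y \subset X)) => [subYX | /subsetPn[x xY xX]].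
- have [x xX xY] : exists2 x, x \in X & x \notin Y.
    by apply/subsetPn; apply: contra neqXY => subXY; rewrite eqEsubset subXY.
  have [s sS lt_xY] := sepS x Y Y0 xY (leq_trans (subset_leq_card subYX) leXl).
  apply: (separated s sS); rewrite ltn_eqF //.
  exact: leq_ltn_trans (dist_set_le s xX) lt_xY.
- have [s sS lt_xX] := sepS x X X0 xX leXl.
  apply: (separated s sS); rewrite gtn_eqF //.
  exact: leq_ltn_trans (dist_set_le s xY) lt_xX.
Qed.

End DistSet.

Theorem mainTheorem1 (T : finType) (e : rel T) (S : {set T}) (l : nat) :
  simple_graph e -> connected_graph e -> S != set0 -> 1 <= l ->
  (solid_resolving e l S <->
   forall (x : T) (Y : {set T}), Y != set0 -> x \notin Y -> #|Y| <= l ->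
     exists2 s, s \in S & dist e s x < dist_set e s Y).
Proof.
move=> _ _ _ _; split.
- exact: solid_resolving_separates.
- exact: separates_solid_resolving.
Qed.
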